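(* The group $G=\mathrm{SL}_3(\mathbb F_2)$ realizes $\langle 8,7,7\rangle$ via a TPP triple of subgroups, and consequently $\beta(\mathrm{SL}_3(\mathbb F_2))\ge 392=\frac{7}{3}|\mathrm{SL}_3(\mathbb F_2)|$.
   Context: For a nonempty subset $X$ of a group $G$, $Q(X):=\{xy^{-1}: x,y\in X\}$. Nonempty subsets $S_1,S_2,S_3$ of $G$ satisfy the Triple Product Property (TPP) if for all $s_i\in Q(S_i)$: $s_1s_2s_3=1$ iff $s_1=s_2=s_3=1$. A group $G$ realizes $\langle n,p,m\rangle$ if there are subsets $S_1,S_2,S_3\subseteq G$ with $|S_1|=n$, $|S_2|=p$, $|S_3|=m$ satisfying the TPP; it does so via a TPP triple of subgroups if the $S_i$ can be chosen to be subgroups. For a nontrivial finite group $G$, $\beta(G):=\max\{npm : G \text{ realizes } \langle n,p,m\rangle\}$. Here $|\mathrm{SL}_3(\mathbb F_2)|=168$. *)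

From HB Require Import structures.
From mathcomp Require Import all_boot all_order all_algebra all_fingroup.
Set Implicit Arguments. Unset Strict Implicit. Unset Printing Implicit Defensive.
Import GRing.Theory.

Local Open Scope group_scope.

Definition Qset (gT : finGroupType) (X : {set gT}) : {set gT} :=
  [set x * y^-1 | x in X, y in X].

Definition TPP (gT : finGroupType) (S1 S2 S3 : {set gT}) : bool :=
  [&& S1 != set0, S2 != set0, S3 != set0 &
   [forall s1 in Qset S1, forall s2 in Qset S2, forall s3 in Qset S3,
     (s1 * s2 * s3 == 1) == [&& s1 == 1, s2 == 1 & s3 == 1]]].

Definition realizes (gT : finGroupType) (G : {set gT}) (n p m : nat) : Prop :=
  exists S1 S2 S3 : {set gT},
    [/\ S1 \subset G, S2 \subset G, S3 \subset G,
        [/\ #|S1| = n, #|S2| = p & #|S3| = m] & TPP S1 S2 S3].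

Definition realizes_subgroups (gT : finGroupType) (G : {set gT}) (n p m : nat)
  : Prop :=
  exists H1 H2 H3 : {group gT},
    [/\ H1 \subset G, H2 \subset G, H3 \subset G,
        [/\ #|H1| = n, #|H2| = p & #|H3| = m] & TPP H1 H2 H3].

Definition beta (gT : finGroupType) (G : {set gT}) : nat :=
  \max_(T : {set gT} * {set gT} * {set gT} |
          [&& T.1.1 \subset G, T.1.2 \subset G, T.2 \subset G &
              TPP T.1.1 T.1.2 T.2])
     (#|T.1.1| * #|T.1.2| * #|T.2|)%N.

Definition SL (n : nat) (R : finComUnitRingType) : {set {'GL_n[R]}} :=
  [set g : {'GL_n[R]} | (\det (GLval g) == 1)%R].

Lemma SL_group_set (n : nat) (R : finComUnitRingType) : group_set (SL n R).
Proof.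
apply/group_setP; split; first by rewrite inE GL_1E det1.
move=> x y; rewrite !inE GL_MxE det_mulmx => /eqP -> /eqP ->.
by rewrite mulr1.
Qed.

Canonical SL_group (n : nat) (R : finComUnitRingType) := group (SL_group_set n R).

(** For subgroups, the triple product property amounts to
    [H1 :&: H2 = 1] and [H1 * H2 :&: H3 = 1]: if [h1 h2 h3 = 1] then
    [h3^-1 = h1 h2] lies in both [H1 * H2] and [H3], so [h3 = 1], and then
    [h1 = h2^-1] lies in [H1 :&: H2].  In [SL_3(F_2) = GL_3(F_2)] take for
    [H1] the upper unitriangular matrices (order 8) and for [H2], [H3] the
    cyclic groups of order 7 generated by two Singer cycles [A] and [B].
    Then [H1 :&: H2 = 1] by coprimality, and the fact that no nontrivial
    power of [B] lies in the 56-element set [H1 * <[A]>] is a finite check,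
    done by computing with boolean 3x3 matrices. *)

From mathcomp Require Import all_boot all_order all_algebra all_fingroup.
From mathcomp Require Import cyclic.
Set Implicit Arguments. Unset Strict Implicit. Unset Printing Implicit Defensive.
Import GRing.Theory.

Local Open Scope group_scope.

Section TPPGroups.

Variable gT : finGroupType.
Implicit Types H : {group gT}.

Lemma Qset_group H : Qset H = H.
Proof.
apply/setP => x; apply/imset2P/idP => [[y z Hy Hz ->]|Hx].
  by rewrite groupM ?groupV.
by exists x 1; rewrite ?group1 ?invg1 ?mulg1.
Qed.

Lemma TPP_groupsP H1 H2 H3 :
  reflect (H1 :&: H2 = 1 /\ H1 * H2 :&: H3 \subset [1]) (TPP H1 H2 H3).
Proof.
have nonempty H : (H : {set gT}) != set0 by apply/set0Pn; exists 1.
rewrite /TPP !Qset_group !nonempty /=.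
apply: (iffP forall_inP) => [tpp | [TI12 TI123] h1 H1h1].
  have tpp12 h1 h2 h3 : h1 \in H1 -> h2 \in H2 -> h3 \in H3 ->
      h1 * h2 * h3 = 1 -> h1 = 1 /\ h2 = 1.
    move=> H1h1 H2h2 H3h3 prod1.
    move/forall_inP/(_ h2 H2h2)/forall_inP/(_ h3 H3h3): (tpp h1 H1h1).
    by rewrite prod1 eqxx => /eqP/esym/and3P[/eqP-> /eqP-> _].
  split.
  - apply/trivgP/subsetP => x /setIP[H1x H2x].
    have prod1 : x * x^-1 * 1 = 1 by rewrite mulgV mulg1.
    by have [-> _] := tpp12 x x^-1 1 H1x (groupVr H2x) (group1 _) prod1.
  - apply/subsetP => _ /setIP[/mulsgP[h1 h2 H1h1 H2h2 ->] H3x].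
    have [-> ->] := tpp12 h1 h2 (h1 * h2)^-1 H1h1 H2h2 (groupVr H3x) (mulgV _).
    by rewrite mulg1 set11.
apply/forall_inP => h2 H2h2; apply/forall_inP => h3 H3h3.
apply/eqP; apply/idP/and3P => [/eqP prod1 | [/eqP-> /eqP-> /eqP->]];
  last by rewrite !mulg1.
have h3_1 : h3 = 1.
  have h12 : h1 * h2 = h3^-1 by rewrite -[h3^-1]mul1g -prod1 mulgK.
  have : h3^-1 \in H1 * H2 :&: H3 by rewrite inE groupV H3h3 -h12 mem_mulg.
  by move/(subsetP TI123)/set1P/eqP; rewrite invg_eq1 => /eqP.
have h1_1 : h1 = 1.
  have h1V : h1 = h2^-1.
    by apply/eqP; rewrite eq_mulgV1 invgK; move: prod1; rewrite h3_1 mulg1 => ->.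
  have : h1 \in H1 :&: H2 by rewrite inE H1h1 h1V groupV.
  by rewrite TI12 => /set1P.
by move: prod1; rewrite h1_1 h3_1 !mulg1 mul1g => ->.
Qed.

End TPPGroups.

Lemma realizes_subgroups_realizes (gT : finGroupType) (G : {set gT}) n p m :
  realizes_subgroups G n p m -> realizes G n p m.
Proof. by case=> [H1 [H2 [H3 ?]]]; exists H1, H2, H3. Qed.

Lemma realizes_leq_beta (gT : finGroupType) (G : {set gT}) n p m :
  realizes G n p m -> (n * p * m <= beta G)%N.
Proof.
case=> [S1 [S2 [S3 [sS1G sS2G sS3G [<- <- <-] tpp]]]].
by apply: (leq_bigmax_cond (S1, S2, S3)); rewrite /= sS1G sS2G sS3G tpp.
Qed.

Lemma SL_F2 n : SL n 'F_2 = [set: {'GL_n['F_2]}].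
Proof.
apply/setP => g; rewrite !inE; have := GL_det g.
by case: (\det (GLval g))%R => [[|[|k]] ?].
Qed.

Lemma card_SL3_F2 : #|SL 3 'F_2| = 168%N.
Proof.
rewrite SL_F2 (@card_GL 'F_2 3 isT) (@card_Fp 2 isT).
by rewrite big_ltn // big_ltn // big_ltn // big_geq.
Qed.

Lemma order_prime (gT : finGroupType) (g : gT) p :
  prime p -> g != 1 -> g ^+ p = 1 -> #[g] = p.
Proof.
move=> p_pr ntg gp1; apply/prime_nt_dvdP; rewrite ?order_eq1 //.
by rewrite order_dvdn gp1.
Qed.

Definition bool3 := (bool * bool * bool)%type.
Definition bmx := (bool3 * bool3 * bool3)%type.

Definition bool3_nth (r : bool3) (j : nat) : bool :=
  let: (x, y, z) := r in match j with 0 => x | 1 => y | _ => z end.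
Definition bmx_entry (A : bmx) (i j : nat) : bool :=
  let: (r0, r1, r2) := A in
  bool3_nth (match i with 0 => r0 | 1 => r1 | _ => r2 end) j.
Definition bmx_of (f : nat -> nat -> bool) : bmx :=
  ((f 0 0, f 0 1, f 0 2), (f 1 0, f 1 1, f 1 2), (f 2 0, f 2 1, f 2 2))%N.

Definition bmx_mul (A B : bmx) : bmx :=
  bmx_of (fun i j => odd (bmx_entry A i 0 * bmx_entry B 0 j
    + bmx_entry A i 1 * bmx_entry B 1 j + bmx_entry A i 2 * bmx_entry B 2 j)).
Definition bmx1 : bmx :=
  ((true, false, false), (false, true, false), (false, false, true)).
Definition bmx_exp (A : bmx) (n : nat) : bmx := iter n (bmx_mul A) bmx1.

Lemma bmx_entryK (A : bmx) : bmx_of (bmx_entry A) = A.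
Proof. by case: A => [[[[? ?] ?] [[? ?] ?]] [[? ?] ?]]. Qed.

Lemma bmx_entry_of f (i j : 'I_3) : bmx_entry (bmx_of f) i j = f i j.
Proof. by case: i => [[|[|[|i]]] ?] //; case: j => [[|[|[|j]]] ?]. Qed.

Section BoolMatrices.

Local Open Scope ring_scope.

Definition mx_of_bmx (A : bmx) : 'M['F_2]_3 := \matrix_(i, j) (bmx_entry A i j)%:R.

Lemma natr_odd_F2 n : n%:R = (odd n)%:R :> 'F_2.
Proof. by rewrite -(@Fp_nat_mod 2 isT n) modn2. Qed.

Lemma mx_of_bmxM A B : mx_of_bmx A *m mx_of_bmx B = mx_of_bmx (bmx_mul A B).
Proof.
apply/matrixP => i j; rewrite [RHS]mxE bmx_entry_of !mxE.
by rewrite !big_ord_recr big_ord0 /= !mxE add0r -!natrM -!natrD natr_odd_F2.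
Qed.

Lemma mx_of_bmx1 : mx_of_bmx bmx1 = 1%:M.
Proof.
apply/matrixP => i j; rewrite !mxE.
by case: i => [[|[|[|i]]] ?] //; case: j => [[|[|[|j]]] ?].
Qed.

Lemma mx_of_bmx_inj : injective mx_of_bmx.
Proof.
move=> A B /matrixP eqAB; rewrite -(bmx_entryK A) -(bmx_entryK B).
have entry i j : (i < 3)%N -> (j < 3)%N -> bmx_entry A i j = bmx_entry B i j.
  move=> lti ltj; have := eqAB (Ordinal lti) (Ordinal ltj); rewrite !mxE.
  by case: (bmx_entry A i j); case: (bmx_entry B i j); rewrite ?oner_eq0.
by rewrite /bmx_of !entry.
Qed.

Definition GL_of_bmx (A : bmx) : {'GL_3['F_2]} :=
  insubd (1 : {'GL_3['F_2]})%g (mx_of_bmx A).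

Lemma GL_of_bmxK A B : bmx_mul A B = bmx1 -> GLval (GL_of_bmx A) = mx_of_bmx A.
Proof.
move=> AB1; apply: insubdK.
have AB1mx : mx_of_bmx A *m mx_of_bmx B = 1%:M by rewrite mx_of_bmxM AB1 mx_of_bmx1.
exact: (mulmx1_unit AB1mx).1.
Qed.

End BoolMatrices.

Notation GL3 := {'GL_3['F_2]}.

Lemma GL_eq_bmx (g h : GL3) A B :
  GLval g = mx_of_bmx A -> GLval h = mx_of_bmx B -> (g == h) = (A == B).
Proof.
move=> gA hB; apply/eqP/eqP => [gh | AB].
  by apply: mx_of_bmx_inj; rewrite -gA -hB gh.
by apply: val_inj; rewrite /= gA hB AB.
Qed.

Lemma GLval1_bmx : GLval (1 : GL3) = mx_of_bmx bmx1.
Proof. by rewrite GL_1E mx_of_bmx1. Qed.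

Lemma GLvalM_bmx (g h : GL3) A B :
  GLval g = mx_of_bmx A -> GLval h = mx_of_bmx B ->
  GLval (g * h) = mx_of_bmx (bmx_mul A B).
Proof. by move=> gA hB; rewrite GL_MxE gA hB mx_of_bmxM. Qed.

Lemma GLvalX_bmx (g : GL3) A n :
  GLval g = mx_of_bmx A -> GLval (g ^+ n) = mx_of_bmx (bmx_exp A n).
Proof.
move=> gA; elim: n => [|n IHn]; first exact: GLval1_bmx.
by rewrite expgS (GLvalM_bmx gA IHn).
Qed.

Definition bmx_unitri (t : bool3) : bmx :=
  let: (x, y, z) := t in ((true, x, y), (false, true, z), (false, false, true)).
Definition unitri_mul (t t' : bool3) : bool3 :=
  let: (x, y, z) := t in let: (x', y', z') := t' in
  (x (+) x', y (+) y' (+) x && z', z (+) z').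
Definition unitri_inv (t : bool3) : bool3 :=
  let: (x, y, z) := t in (x, y (+) x && z, z).

Lemma bmx_unitriM t t' :
  bmx_mul (bmx_unitri t) (bmx_unitri t') = bmx_unitri (unitri_mul t t').
Proof. by case: t => [[[] []] []]; case: t' => [[[] []] []]. Qed.

Lemma bmx_unitriV t : bmx_mul (bmx_unitri t) (bmx_unitri (unitri_inv t)) = bmx1.
Proof. by case: t => [[[] []] []]. Qed.

Lemma GL_of_unitriK t :
  GLval (GL_of_bmx (bmx_unitri t)) = mx_of_bmx (bmx_unitri t).
Proof. exact: GL_of_bmxK (bmx_unitriV t). Qed.

Definition unitri : {set GL3} := [set GL_of_bmx (bmx_unitri t) | t : bool3].

Lemma unitri_group_set : group_set unitri.
Proof.
apply/group_setP; split.
  apply/imsetP; exists (false, false, false) => //; apply/eqP.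
  by rewrite eq_sym (GL_eq_bmx (GL_of_unitriK _) GLval1_bmx).
move=> _ _ /imsetP[t _ ->] /imsetP[t' _ ->].
apply/imsetP; exists (unitri_mul t t') => //; apply/eqP.
by rewrite (GL_eq_bmx (GLvalM_bmx (GL_of_unitriK t) (GL_of_unitriK t'))
  (GL_of_unitriK _)) bmx_unitriM.
Qed.

Canonical unitri_group := group unitri_group_set.

Lemma card_unitri : #|unitri| = 8%N.
Proof.
rewrite card_imset; first by rewrite !card_prod card_bool.
move=> t t' /eqP.
rewrite (GL_eq_bmx (GL_of_unitriK t) (GL_of_unitriK t')).
by case: t => [[[] []] []]; case: t' => [[[] []] []].
Qed.

Definition singer_a : bmx :=
  ((false, false, true), (false, true, true), (true, true, false)).
Definition singer_b : bmx :=
  ((false, false, true), (true, true, false), (false, true, true)).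

Lemma order7_GL_of_bmx A : bmx_exp A 7 = bmx1 -> A != bmx1 -> #[GL_of_bmx A] = 7%N.
Proof.
move=> A7 ntA; have AK : GLval (GL_of_bmx A) = mx_of_bmx A.
  by apply: (GL_of_bmxK (B := bmx_exp A 6)).
apply: order_prime => //; first by rewrite (GL_eq_bmx AK GLval1_bmx).
by apply/eqP; rewrite (GL_eq_bmx (GLvalX_bmx 7 AK) GLval1_bmx) A7.
Qed.

Definition bool3_seq : seq bool3 :=
  let bs := [:: false; true] in
  [seq (xy, z) | xy <- [seq (x, y) | x <- bs, y <- bs], z <- bs].

Definition unitri_singer_TI_bmx (t : bool3) (i j : nat) : bool :=
  (bmx_mul (bmx_unitri t) (bmx_exp singer_a i) == bmx_exp singer_b j)
    ==> (bmx_exp singer_b j == bmx1).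

Lemma unitri_singer_TI_bmx_check :
  all (fun t => all (fun i => all (unitri_singer_TI_bmx t i) (iota 0 7)) (iota 0 7))
      bool3_seq.
Proof. by vm_compute. Qed.

Lemma unitri_singer_TI_bmxP t i j : (i < 7)%N -> (j < 7)%N ->
  bmx_mul (bmx_unitri t) (bmx_exp singer_a i) = bmx_exp singer_b j ->
  bmx_exp singer_b j = bmx1.
Proof.
move=> lti ltj /eqP uab; apply/eqP; move: uab; apply/implyP.
have t_in : t \in bool3_seq by case: t => [[[] []] []].
have i_in : i \in iota 0 7 by rewrite mem_iota.
have j_in : j \in iota 0 7 by rewrite mem_iota.
exact: (allP (allP (allP unitri_singer_TI_bmx_check t t_in) i i_in) j j_in).
Qed.

Definition singer_A : GL3 := GL_of_bmx singer_a.
Definition singer_B : GL3 := GL_of_bmx singer_b.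

Lemma singer_AK : GLval singer_A = mx_of_bmx singer_a.
Proof. exact: (GL_of_bmxK (B := bmx_exp singer_a 6)). Qed.

Lemma singer_BK : GLval singer_B = mx_of_bmx singer_b.
Proof. exact: (GL_of_bmxK (B := bmx_exp singer_b 6)). Qed.

Lemma order_singer_A : #[singer_A] = 7%N. Proof. exact: order7_GL_of_bmx. Qed.
Lemma order_singer_B : #[singer_B] = 7%N. Proof. exact: order7_GL_of_bmx. Qed.

Lemma unitri_singer_TI : unitri * <[singer_A]> :&: <[singer_B]> \subset [1].
Proof.
apply/subsetP => _ /setIP[/mulsgP[_ _ /imsetP[t _ ->] /cyclePmin[i lti ->] ->]].
case/cyclePmin=> j ltj uAB.
rewrite order_singer_A in lti; rewrite order_singer_B in ltj.
have uab := congr1 GLval uAB.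
rewrite (GLvalM_bmx (GL_of_unitriK t) (GLvalX_bmx i singer_AK)) in uab.
move: uab; rewrite (GLvalX_bmx j singer_BK) => /mx_of_bmx_inj uab.
rewrite uAB inE (GL_eq_bmx (GLvalX_bmx j singer_BK) GLval1_bmx).
by rewrite (unitri_singer_TI_bmxP lti ltj uab).
Qed.

Theorem mainTheorem7 :
  realizes_subgroups (SL 3 'F_2) 8 7 7 /\
  (392 <= beta (SL 3 'F_2))%N /\ (3 * 392 = 7 * #|SL 3 'F_2|)%N.
Proof.
have tpp : TPP unitri_group <[singer_A]> <[singer_B]>.
  apply/TPP_groupsP; split; last exact: unitri_singer_TI.
  by apply: coprime_TIg; rewrite card_unitri -orderE order_singer_A.
have realizes_877 : realizes_subgroups (SL 3 'F_2) 8 7 7.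
  exists unitri_group, <[singer_A]>%G, <[singer_B]>%G.
  rewrite SL_F2 !subsetT -!orderE order_singer_A order_singer_B card_unitri.
  by split.
split; first exact: realizes_877.
split; last by rewrite card_SL3_F2.
exact: realizes_leq_beta (realizes_subgroups_realizes realizes_877).
Qed.
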